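(* Let $q>1$, let $\chi_q$ be a real Dirichlet character modulo $q$, and let $\tilde\chi_q$ be any modified character associated with $\chi_q$. Then for every integer $k\ge1$ there exists $n\in\mathbb{N}\cup\{0\}$ such that $$\sum_{m=1}^{k}\tilde\chi_q(n+m)\ \ge 0,$$ equivalently $\#\{1\le m\le k:\tilde\chi_q(n+m)=-1\}\le k/2$. In particular $\delta(k)\le k/2$ for all $k\ge1$.
   Context: For an integer $q>1$ and a real-valued (i.e. $\{0,\pm1\}$-valued) Dirichlet character $\chi_q$ modulo $q$ (principal or not), a modified character $\tilde\chi_q$ is the completely multiplicative function $\mathbb{N}\to\{+1,-1\}$ defined on primes by $\tilde\chi_q(p)=\chi_q(p)$ if $p\nmid q$, and $\tilde\chi_q(p)=\eta(p)$ if $p\mid q$, where $\eta(p)\in\{+1,-1\}$ is an arbitrary choice of sign for each prime $p\mid q$. Here $\delta(k)$ denotes the supremum, over all $q>1$, all real characters $\chi_q$ mod $q$ and all sign choices $\eta$, of $\min_{n\ge0}\#\{1\le m\le k:\tilde\chi_q(n+m)=-1\}$. *)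

From mathcomp Require Import all_boot all_order all_algebra.
Set Implicit Arguments. Unset Strict Implicit. Unset Printing Implicit Defensive.
Import Order.TTheory GRing.Theory Num.Theory.
Local Open Scope ring_scope.

Definition real_dirichlet_char (q : nat) (chi : nat -> int) : Prop :=
  [/\ forall n, chi n = 0 \/ chi n = 1 \/ chi n = -1,
      forall m n, chi (m * n)%N = chi m * chi n,
      forall n, chi (n + q)%N = chi n &
      forall n, (chi n = 0) <-> ~~ coprime n q].

(* f : N_{>=1} -> {+1,-1} is a modified character associated with chi:
   completely multiplicative, f p = chi p for primes p not dividing q, and
   f p = eta p in {+1,-1} (arbitrary) for primes p dividing q. *)
Definition modified_char (q : nat) (chi : nat -> int) (f : nat -> int) : Prop :=
  [/\ forall n, (0 < n)%N -> f n = 1 \/ f n = -1,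
      f 1%N = 1,
      forall m n, (0 < m)%N -> (0 < n)%N -> f (m * n)%N = f m * f n &
      forall p, prime p -> ~~ (p %| q)%N -> f p = chi p].

From mathcomp Require Import all_boot all_order all_algebra.
From mathcomp Require Import zify.
From Stdlib Require Import Classical.
Set Implicit Arguments. Unset Strict Implicit. Unset Printing Implicit Defensive.
Import Order.TTheory GRing.Theory Num.Theory.
Local Open Scope ring_scope.

(* Let F(n) = sum_(d | n) f(d).  For f completely multiplicative with values
   +-1 we have F(p^j r) = (1 + f(p) + ... + f(p)^j) F(r) when p does not divide
   r, hence F >= 0.  Counting the pairs (d, e) with d e <= x gives
   sum_(n <= x) F(n) = sum_(m <= x) T(x / m), where T(y) = sum_(a <= y) f(a).
   If every window of k consecutive values of f had a negative sum, then
   T(y) <= k - 1 - y / k, so the right-hand side would be at most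
   (k - 1) x - sum_(m <= x) x / (m k).  For x = k Y with Y = 2^(2k^2) this is
   negative, because sum_(m <= Y) Y / m >= (Y log2 Y) / 2. *)

Lemma big_nat_widen_cond (F : nat -> int) (P : pred nat) m n :
  (forall a, P a -> (a < m)%N) -> (m <= n)%N ->
  \sum_(0 <= a < m | P a) F a = \sum_(0 <= a < n | P a) F a.
Proof.
move=> Pm le_mn; rewrite [RHS](big_cat_nat _ (n := m)) //= [X in _ + X]big_nat_cond.
rewrite [X in _ + X]big1 ?addr0 // => a /andP[/andP[le_ma _] Pa].
by have := Pm a Pa; rewrite ltnNge le_ma.
Qed.

Lemma sum_sign_expr_ge0 (s : int) n : s = 1 \/ s = -1 -> 0 <= \sum_(i < n) s ^+ i.
Proof.
case=> ->; first by rewrite sumr_ge0 // => i _; rewrite expr1n.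
suff -> : \sum_(i < n) (-1 : int) ^+ i = odd n by [].
elim: n => [|n IHn]; first by rewrite big_ord0.
by rewrite big_ord_recr /= IHn -signr_odd; case: (odd n).
Qed.

Definition sum_floor_div (y : nat) : nat := \sum_(1 <= m < y.+1) y %/ m.

Lemma sum_floor_div_double y : (2 * sum_floor_div y + y <= sum_floor_div (2 * y))%N.
Proof.
rewrite /sum_floor_div [X in (_ <= X)%N](big_cat_nat _ (n := y.+1)) //=; last by lia.
apply: leq_add.
  rewrite big_distrr /=; apply: leq_sum => -[|m] _; first by rewrite !divn0.
  by rewrite leq_divRL // -mulnA leq_mul2l leq_divM orbT.
apply: (@leq_trans (\sum_(y.+1 <= m < (2 * y).+1) 1)%N).
  by rewrite sum_nat_const_nat muln1; lia.
rewrite big_nat_cond [X in (_ <= X)%N]big_nat_cond.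
by apply: leq_sum => m /andP[/andP[y_lt_m m_le_2y] _]; rewrite divn_gt0 //; lia.
Qed.

Lemma sum_floor_div_pow2 j : (j * 2 ^ j <= 2 * sum_floor_div (2 ^ j))%N.
Proof.
elim: j => [|j IHj] //.
have := sum_floor_div_double (2 ^ j); rewrite -expnS expnS; nia.
Qed.

Section DivisorSum.

Variable f : nat -> int.

Definition divisor_sum (n : nat) : int := \sum_(0 <= d < n.+1 | (d %| n)%N) f d.

Definition divisor_sum_coprime (p n : nat) : int :=
  \sum_(0 <= d < n.+1 | ((d %| n) && ~~ (p %| d))%N) f d.

Lemma divisor_sum_coprime_pmul p m : prime p -> (0 < m)%N ->
  divisor_sum_coprime p (p * m) = divisor_sum_coprime p m.
Proof.
move=> p_pr m_gt0.
rewrite /divisor_sum_coprime [RHS](@big_nat_widen_cond _ _ m.+1 (p * m).+1).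
- apply: eq_bigl => d; case pd: (p %| d)%N; rewrite ?andbF ?andbT //.
  by rewrite Gauss_dvdr // coprime_sym prime_coprime // pd.
- by move=> d /andP[/dvdn_leq dm _]; rewrite ltnS dm.
- by rewrite ltnS leq_pmull ?prime_gt0.
Qed.

Lemma divisor_sum_coprime_ppow p j r : prime p -> (0 < r)%N ->
  divisor_sum_coprime p (p ^ j * r) = divisor_sum_coprime p r.
Proof.
move=> p_pr r_gt0; elim: j => [|j IHj]; first by rewrite mul1n.
by rewrite expnS -mulnA divisor_sum_coprime_pmul // muln_gt0 expn_gt0 prime_gt0.
Qed.

Lemma divisor_sum_coprimeE p r : ~~ (p %| r)%N ->
  divisor_sum_coprime p r = divisor_sum r.
Proof.
move=> pNr; apply: eq_bigl => d; case dr: (d %| r)%N => //=.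
by apply/negP => pd; case/negP: pNr; apply: dvdn_trans dr.
Qed.

Definition partial_sum (y : nat) : int := \sum_(1 <= a < y.+1) f a.

Lemma sum_divisor_sum x :
  \sum_(1 <= n < x.+1) divisor_sum n = \sum_(1 <= d < x.+1) f d *+ (x %/ d).
Proof.
under eq_big_nat => n /andP[n_gt0 n_le_x].
  rewrite /divisor_sum (@big_nat_widen_cond _ _ n.+1 x.+1) ?big_mkcond; last 2 first.
  - by move=> d /dvdn_leq; rewrite ltnS; apply.
  - by [].
  over.
rewrite exchange_big_nat /= big_ltn // big_nat_cond big1 ?add0r => [|n]; last first.
  by rewrite dvd0n => /andP[/andP[/lt0n_neq0/negPf ->]].
apply: eq_big_nat => d /andP[d_gt0 _].
elim: x => [|x IHx]; first by rewrite big_geq // div0n.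
rewrite big_nat_recr //= IHx divnS // mulrnDr addrC.
by case: (d %| x.+1)%N; rewrite ?addr0.
Qed.

Lemma sum_partial_sum_div x :
  \sum_(1 <= m < x.+1) partial_sum (x %/ m) = \sum_(1 <= d < x.+1) f d *+ (x %/ d).
Proof.
under eq_big_nat => m /andP[m_gt0 m_le_x].
  rewrite /partial_sum (big_nat_widen 1 _ x.+1 xpredT) ?ltnS ?leq_div // big_mkcond /=.
  over.
rewrite exchange_big_nat /=; apply: eq_big_nat => a /andP[a_gt0 _].
have -> : f a *+ (x %/ a) = \sum_(1 <= m < (x %/ a).+1) f a.
  by rewrite sumr_const_nat subn1.
rewrite [RHS](big_nat_widen 1 _ x.+1 xpredT) ?ltnS ?leq_div // [RHS]big_mkcond /=.
by apply: eq_big_nat => m /andP[m_gt0 _]; rewrite !ltnS leq_divRL // mulnC -leq_divRL.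
Qed.

Lemma partial_sumD y k :
  partial_sum (y + k) = partial_sum y + \sum_(1 <= m < k.+1) f (y + m).
Proof.
rewrite /partial_sum (big_cat_nat _ (n := y.+1)) //= ?ltnS ?leq_addr //; congr (_ + _).
rewrite -[y.+1]add1n big_addn -addnS addKn.
by apply: eq_big_nat => m _; rewrite addnC.
Qed.

Hypothesis fM : forall m n, (0 < m)%N -> (0 < n)%N -> f (m * n)%N = f m * f n.

Lemma divisor_sum_pmul p m : prime p -> (0 < m)%N ->
  divisor_sum (p * m) = divisor_sum_coprime p (p * m) + f p * divisor_sum m.
Proof.
move=> p_pr m_gt0; have p_gt0 := prime_gt0 p_pr.
rewrite /divisor_sum (bigID (fun d => p %| d)%N) /= addrC; congr (_ + _).
rewrite (@big_nat_widen_cond _ _ (p * m).+1 (p * m.+1)); last 2 first.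
- by move=> d /andP[/dvdn_leq dpm _]; rewrite ltnS dpm // muln_gt0 p_gt0.
- by rewrite mulnS; lia.
rewrite big_mkcond mulr_sumr [RHS]big_mkcond /=.
elim: m.+1 => [|n IHn]; first by rewrite muln0 !big_geq.
rewrite mulnS [(p + _)%N]addnC (big_cat_nat _ (n := (p * n)%N)) //= ?leq_addr // IHn.
rewrite big_nat_recr //=; congr (_ + _).
rewrite big_ltn /=; last by lia.
rewrite dvdn_pmul2l // dvdn_mulr ?dvdnn // andbT.
rewrite big_nat_cond big1 ?addr0 => [|d /andP[/andP[lt_d dlt] _]]; last first.
  case: ifP => // /andP[_ pd].
  have := dvdn_leq _ (dvdn_sub pd (dvdn_mulr n (dvdnn p))); lia.
by case: ifP => // n_dvd_m; rewrite fM // (dvdn_gt0 m_gt0 n_dvd_m).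
Qed.

Lemma divisor_sum_ppow p r j : prime p -> ~~ (p %| r)%N -> (0 < r)%N ->
  divisor_sum (p ^ j * r) = (\sum_(i < j.+1) f p ^+ i) * divisor_sum r.
Proof.
move=> p_pr pNr r_gt0; elim: j => [|j IHj]; first by rewrite big_ord1 mul1n mul1r.
have pjr_gt0 : (0 < p ^ j * r)%N by rewrite muln_gt0 expn_gt0 prime_gt0.
rewrite expnS -mulnA divisor_sum_pmul // divisor_sum_coprime_pmul //.
rewrite divisor_sum_coprime_ppow // divisor_sum_coprimeE // IHj.
rewrite [in RHS]big_ord_recl expr0 mulrDl mul1r mulrA [f p * _]mulr_sumr.
by congr (_ + _ * _); apply: eq_bigr => i _; rewrite exprS.
Qed.

Hypothesis f_sign : forall n, (0 < n)%N -> f n = 1 \/ f n = -1.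
Hypothesis f1 : f 1%N = 1.

Lemma divisor_sum_ge0 n : (0 < n)%N -> 0 <= divisor_sum n.
Proof.
elim/ltn_ind: n => n IHn n_gt0; have [n_le1|n_gt1] := leqP n 1.
  have -> : n = 1%N by lia.
  by rewrite /divisor_sum big_mkcond !big_nat_recr //= big_geq // f1 add0r.
have p_pr : prime (pdiv n) by rewrite pdiv_prime.
have [r p_coprime_r def_n] := pfactor_coprime p_pr n_gt0.
have r_gt0 : (0 < r)%N by move: n_gt0; rewrite def_n muln_gt0 => /andP[].
have logn_gt0 : (0 < logn (pdiv n) n)%N.
  by rewrite logn_gt0 mem_primes p_pr n_gt0 pdiv_dvd.
have r_lt_n : (r < n)%N.
  by rewrite def_n ltn_Pmulr // -(expn0 (pdiv n)) ltn_exp2l ?prime_gt1.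
rewrite def_n mulnC divisor_sum_ppow -?prime_coprime // mulr_ge0 ?IHn //.
exact/sum_sign_expr_ge0/f_sign/prime_gt0.
Qed.

Lemma partial_sum_le y : partial_sum y <= y%:Z.
Proof.
apply: le_trans (ler_sum_nat (G := fun _ => 1) _) _ => [a /andP[a_gt0 _]|].
  by case: (f_sign a_gt0) => ->.
by rewrite sumr_const_nat subn1 -natz.
Qed.

Section NegativeWindows.

Variable k : nat.
Hypothesis k_gt0 : (0 < k)%N.
Hypothesis window_lt0 : forall n, \sum_(1 <= m < k.+1) f (n + m)%N < 0.

Lemma partial_sum_le_windows q r : partial_sum (q * k + r) <= r%:Z - q%:Z.
Proof.
elim: q => [|q IHq]; first by rewrite mul0n add0n subr0 partial_sum_le.
have window_le : \sum_(1 <= m < k.+1) f (q * k + r + m)%N <= -1.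
  by rewrite -ltzD1 addNr.
rewrite mulSnr addnAC partial_sumD; apply: le_trans (lerD IHq window_le) _.
by rewrite -addn1 PoszD opprD addrA.
Qed.

Lemma partial_sum_le_div y : partial_sum y <= k.-1%:Z - (y %/ k)%:Z.
Proof.
rewrite {1}(divn_eq y k); apply: le_trans (partial_sum_le_windows _ _) _.
by rewrite lerD2r lez_nat -ltnS prednK // ltn_pmod.
Qed.

Lemma sum_divisor_sum_le Y :
  \sum_(1 <= n < (k * Y).+1) divisor_sum n <=
    (k.-1 * (k * Y))%N%:Z - (sum_floor_div Y)%:Z.
Proof.
rewrite sum_divisor_sum -sum_partial_sum_div.
apply: le_trans (ler_sum_nat (G := fun m => k.-1%:Z - (k * Y %/ m %/ k)%:Z) _) _.
  by move=> m _; apply: partial_sum_le_div.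
rewrite sumrB sumr_const_nat subn1 /= -mulr_natr natz -PoszM lerD2l lerN2.
rewrite -(big_morph Posz PoszD (erefl 0%:Z)) lez_nat /sum_floor_div.
rewrite [X in (_ <= X)%N](big_cat_nat _ (n := Y.+1)) //= ?leq_addr //; last first.
  by rewrite ltnS leq_pmull.
apply/(leq_trans _ (leq_addr _ _))/eq_leq/eq_big_nat => m _.
by rewrite -divnMA [(m * k)%N]mulnC divnMl.
Qed.

End NegativeWindows.

End DivisorSum.

Lemma exists_nonneg_window (f : nat -> int) k :
  (forall n, (0 < n)%N -> f n = 1 \/ f n = -1) -> f 1%N = 1 ->
  (forall m n, (0 < m)%N -> (0 < n)%N -> f (m * n)%N = f m * f n) ->
  (0 < k)%N -> exists n, 0 <= \sum_(1 <= m < k.+1) f (n + m)%N.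
Proof.
move=> f_sign f1 fM k_gt0; apply: NNPP => no_window.
have window_lt0 n : \sum_(1 <= m < k.+1) f (n + m)%N < 0.
  by rewrite ltNge; apply/negP => window_ge0; apply: no_window; exists n.
set Y := (2 ^ (2 * k * k))%N.
have sum_ge0 : 0 <= \sum_(1 <= n < (k * Y).+1) divisor_sum f n.
  rewrite big_nat_cond sumr_ge0 // => n /andP[/andP[n_gt0 _] _].
  exact: divisor_sum_ge0.
have sum_floor_div_large : (k.-1 * (k * Y) < sum_floor_div Y)%N.
  have := sum_floor_div_pow2 (2 * k * k); rewrite -/Y.
  have : (0 < Y)%N by rewrite expn_gt0.
  nia.
have := le_trans sum_ge0 (sum_divisor_sum_le f_sign k_gt0 window_lt0 Y); lia.
Qed.

Theorem mainTheorem2 (q : nat) (chi f : nat -> int) :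
  (1 < q)%N -> real_dirichlet_char q chi -> modified_char q chi f ->
  forall k : nat, (1 <= k)%N ->
    exists n : nat, 0 <= \sum_(1 <= m < k.+1) f (n + m)%N.
Proof. by move=> _ _ [f_sign f1 fM _] k; apply: exists_nonneg_window. Qed.
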